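(* Let $\theta:\Omega A\to\Omega B$ be a map of differential graded algebras, let $M$ be a right $A$-module and $\nabla_0:\mathrm{Hom}_A(\Omega^1A,M)\to M$ a hom-connection. View $B$ and $\Omega^1B$ as $A$-bimodules via $\theta$, regard $\mathrm{Hom}_A(B,M)$ as a right $B$-module by $(gb)(b')=g(bb')$, and identify $\mathrm{Hom}_B(\Omega^1B,\mathrm{Hom}_A(B,M))\cong\mathrm{Hom}_A(\Omega^1B,M)$ via $f\mapsto(\omega\mapsto f(\omega)(1))$. For $b\in B$ let $\ell_b:\Omega^1B\to\Omega^1B$, $\omega\mapsto b\omega$. Then the formula $$\nabla_0^\theta(f)(b):=\nabla_0(f\circ\ell_b\circ\theta)-f(db),\qquad f\in\mathrm{Hom}_A(\Omega^1B,M),\ b\in B,$$ (where $f\circ\ell_b\circ\theta$ is restricted to $\Omega^1A$) defines a hom-connection $\nabla^\theta_0:\mathrm{Hom}_B(\Omega^1B,\mathrm{Hom}_A(B,M))\to\mathrm{Hom}_A(B,M)$ on the right $B$-module $\mathrm{Hom}_A(B,M)$ with respect to $\Omega B$.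
   Context: All algebras are associative and unital over a field $k$. A differential graded algebra $\Omega A=\bigoplus_{n\ge0}\Omega^nA$ over $A=\Omega^0A$ has a degree-one differential $d$ with $d^2=0$ satisfying the graded Leibniz rule; a map of differential graded algebras is a degree-preserving unital algebra map commuting with the differentials. $\mathrm{Hom}_A$ denotes right $A$-linear maps. For a right $A$-module $P$, $\mathrm{Hom}_A(\Omega^1A,P)$ is a right $A$-module via $(fa)(\omega)=f(a\omega)$. A (right) hom-connection on $P$ with respect to $\Omega A$ is a $k$-linear map $\nabla_0:\mathrm{Hom}_A(\Omega^1A,P)\to P$ with $\nabla_0(fa)=\nabla_0(f)a+f(da)$ for all $f$ and $a\in A$; analogously for right $B$-modules with respect to $\Omega B$. *)

From HB Require Import structures.
From mathcomp Require Import all_boot all_order all_algebra.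
From mathcomp Require Import boolp classical_sets functions.
Set Implicit Arguments. Unset Strict Implicit. Unset Printing Implicit Defensive.
Import GRing.Theory.
Local Open Scope ring_scope.

Record dga (k : fieldType) := DGA {
  dg :> nat -> lmodType k;
  dmul : forall m n, dg m -> dg n -> dg (m + n)%N;
  done : dg 0%N;
  dd : forall n, dg n -> dg n.+1;
  dmulDl : forall m n (c : k) (x x' : dg m) (y : dg n),
    dmul (c *: x + x') y = c *: dmul x y + dmul x' y;
  dmulDr : forall m n (c : k) (x : dg m) (y y' : dg n),
    dmul x (c *: y + y') = c *: dmul x y + dmul x y';
  dmulA : forall m n p (x : dg m) (y : dg n) (z : dg p),
    dmul (dmul x y) z = eq_rect _ dg (dmul x (dmul y z)) _ (addnA m n p);
  dmul1l : forall n (x : dg n), dmul done x = x;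
  dmul1r : forall n (x : dg n),
    dmul x done = eq_rect _ dg x _ (esym (addn0 n));
  ddD : forall n (c : k) (x y : dg n), dd (c *: x + y) = c *: dd x + dd y;
  dd2 : forall n (x : dg n), dd (dd x) = 0;
  dd_Leibniz : forall m n (x : dg m) (y : dg n),
    dd (dmul x y) = dmul (dd x) y
                    + (-1) ^+ m *: eq_rect _ dg (dmul x (dd y)) _ (addnS m n)
}.
Arguments dmul {k} _ {m n}.
Arguments done {k} _.
Arguments dd {k} _ {n}.

Definition dga_map (k : fieldType) (W1 W2 : dga k)
    (th : forall n, W1 n -> W2 n) : Prop :=
  [/\ forall n (c : k) (x y : W1 n), th n (c *: x + y) = c *: th n x + th n y,
      th 0%N (done W1) = done W2,
      forall m n (x : W1 m) (y : W1 n),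
        th (m + n)%N (dmul W1 x y) = dmul W2 (th m x) (th n y)
    & forall n (x : W1 n), th n.+1 (dd W1 x) = dd W2 (th n x)].

Definition rmodule (k : fieldType) (W : dga k) (P : lmodType k)
    (act : P -> W 0%N -> P) : Prop :=
  [/\ forall (c : k) (p p' : P) (a : W 0%N), act (c *: p + p') a = c *: act p a + act p' a,
      forall (c : k) (p : P) (a a' : W 0%N),
        act p (c *: a + a') = c *: act p a + act p a',
      forall p : P, act p (done W) = p
    & forall (p : P) (a a' : W 0%N), act (act p a) a' = act p (dmul W a a')].

(* Right A-linear maps Omega^1 A -> P, where P is (a submodule, given by the
   predicate S, of) a right A-module with action act.  (fa)(w) = f(a w). *)
Definition is_rhom1 (k : fieldType) (W : dga k) (P : lmodType k)
    (S : P -> Prop) (act : P -> W 0%N -> P) (f : W 1%N -> P) : Prop :=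
  [/\ forall w, S (f w),
      forall (c : k) (w w' : W 1%N), f (c *: w + w') = c *: f w + f w'
    & forall (w : W 1%N) (a : W 0%N), f (dmul W w a) = act (f w) a].

(* A (right) hom-connection on the right module (P restricted to S, action act)
   with respect to W: a k-linear map nabla : Hom_A(Omega^1 A, P) -> P with
   nabla (f a) = nabla f a + f (d a).  nabla is given as a function on all
   maps W 1%N -> P; only its values on right A-linear maps matter. *)
Definition hom_connection (k : fieldType) (W : dga k) (P : lmodType k)
    (S : P -> Prop) (act : P -> W 0%N -> P) (nabla : (W 1%N -> P) -> P) : Prop :=
  forall f g : W 1%N -> P, is_rhom1 S act f -> is_rhom1 S act g ->
  [/\ S (nabla f),
      forall c : k, nabla (fun w => c *: f w + g w) = c *: nabla f + nabla g
    & forall a : W 0%N, nabla (fun w => f (dmul W a w)) = act (nabla f) a + f (dd W a)].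

Definition homAB (k : fieldType) (WA WB : dga k) (th : forall n, WA n -> WB n)
    (M : lmodType k) (actM : M -> WA 0%N -> M) (g : WB 0%N -> M) : Prop :=
  (forall (c : k) (b b' : WB 0%N), g (c *: b + b') = c *: g b + g b')
  /\ forall (b : WB 0%N) (a : WA 0%N), g (dmul WB b (th 0%N a)) = actM (g b) a.

Definition actHom (k : fieldType) (WB : dga k) (M : lmodType k)
    (g : WB 0%N -> M) (b : WB 0%N) : WB 0%N -> M :=
  fun b' => g (dmul WB b b').

(* The induced connection, written on F in Hom_B(Omega^1 B, Hom_A(B, M)),
   through the identification F |-> f := (w |-> F w 1):
   nabla^theta(f)(b) = nabla0 (f o l_b o theta) - f (d b). *)
Definition nabla_theta (k : fieldType) (WA WB : dga k)
    (th : forall n, WA n -> WB n) (M : lmodType k) (nabla0 : (WA 1%N -> M) -> M)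
    (F : WB 1%N -> (WB 0%N -> M)) : WB 0%N -> M :=
  fun b => nabla0 (fun w => F (dmul WB b (th 1%N w)) (done WB))
           - F (dd WB b) (done WB).

From HB Require Import structures.
From mathcomp Require Import all_boot all_order all_algebra.
From mathcomp Require Import boolp classical_sets functions.
Import GRing.Theory.

(* For F in Hom_B(Omega^1 B, Hom_A(B, M)) and b in B, the map
   w |-> F (b theta(w)) 1 is right A-linear on Omega^1 A, so nabla0 applies to
   it.  Both axioms of nabla^theta then reduce to those of nabla0: the B-action
   moves b into the argument of F, and the extra term F (d b') 1 produced by
   the Leibniz rule d (b b') = (d b) b' + b (d b') cancels against the
   correction term -F (d (b b')) 1. *)

Section DgaLowDegree.
Context {k : fieldType} {W : dga k}.

Lemma eq_rect_id n (p : n = n) (x : W n) : eq_rect n (dg W) x n p = x.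
Proof. by rewrite (eq_irrelevance p erefl). Qed.

Lemma dmulA001 (x y : W 0%N) (z : W 1%N) :
  dmul W (dmul W x y) z = dmul W x (dmul W y z).
Proof. by rewrite dmulA eq_rect_id. Qed.

Lemma dmulA010 (x : W 0%N) (y : W 1%N) (z : W 0%N) :
  dmul W (dmul W x y) z = dmul W x (dmul W y z).
Proof. by rewrite dmulA eq_rect_id. Qed.

Lemma dmul1r0 (x : W 0%N) : dmul W x (done W) = x.
Proof. by rewrite dmul1r eq_rect_id. Qed.

Lemma dd_Leibniz0 (x y : W 0%N) :
  dd W (dmul W x y) = (dmul W (dd W x) y + dmul W x (dd W y))%R.
Proof. by rewrite dd_Leibniz expr0 scale1r eq_rect_id. Qed.

Lemma rhom1D {P : lmodType k} {S : P -> Prop} {act : P -> W 0%N -> P}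
    {f : W 1%N -> P} :
  is_rhom1 S act f -> forall x y, f (x + y)%R = (f x + f y)%R.
Proof. by case=> _ fL _ x y; have := fL 1%R x y; rewrite !scale1r. Qed.

Lemma rmoduleBl {P : lmodType k} {act : P -> W 0%N -> P} :
  rmodule act -> forall (p p' : P) a, act (p - p')%R a = (act p a - act p' a)%R.
Proof.
by case=> actL _ _ _ p p' a; rewrite -scaleN1r addrC actL scaleN1r addrC.
Qed.

End DgaLowDegree.

Section InducedHomConnection.
Local Open Scope ring_scope.
Context {k : fieldType} {WA WB : dga k} {th : forall n, WA n -> WB n}.
Context {M : lmodType k} {actM : M -> WA 0%N -> M} {nabla0 : (WA 1%N -> M) -> M}.
Hypothesis th_dga : dga_map th.
Hypothesis M_rmod : rmodule actM.
Hypothesis nabla0_conn : hom_connection (fun _ : M => True) actM nabla0.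

Let homB1 := is_rhom1 (homAB th actM) (@actHom k WB M).
Let pullback (F : WB 1%N -> WB 0%N -> M) (b : WB 0%N) : WA 1%N -> M :=
  fun w => F (dmul WB b (th 1%N w)) (done WB).

Lemma nabla_thetaE F b :
  nabla_theta th nabla0 F b = nabla0 (pullback F b) - F (dd WB b) (done WB).
Proof. by []. Qed.

Lemma homAB_mul_th (g : WB 0%N -> M) a : homAB th actM g ->
  g (th 0%N a) = actM (g (done WB)) a.
Proof. by case=> _ gA; rewrite -gA dmul1l. Qed.

Lemma pullback_rhom1 F (b : WB 0%N) :
  homB1 F -> is_rhom1 (fun _ : M => True) actM (pullback F b).
Proof.
case: th_dga => thL _ thM _ [FS FL FA]; split=> // [c w w' | w a].
  by rewrite /pullback thL dmulDr FL.
rewrite /pullback (thM 1%N 0%N) -dmulA010 FA /actHom dmul1r0.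
exact: homAB_mul_th.
Qed.

Lemma pullbackDl F c (b b' : WB 0%N) : homB1 F ->
  pullback F (c *: b + b') = (fun w => c *: pullback F b w + pullback F b' w).
Proof. by case=> _ FL _; apply: funext => w; rewrite /pullback dmulDl FL. Qed.

Lemma pullback_mul_th F (b : WB 0%N) (a : WA 0%N) :
  pullback F (dmul WB b (th 0%N a)) = (fun w => pullback F b (dmul WA a w)).
Proof.
case: th_dga => _ _ thM _; apply: funext => w.
by rewrite /pullback (thM 0%N 1%N) dmulA001.
Qed.

Lemma pullback_mul F (b b' : WB 0%N) :
  pullback (fun w => F (dmul WB b w)) b' = pullback F (dmul WB b b').
Proof. by apply: funext => w; rewrite /pullback dmulA001. Qed.

Lemma nabla_theta_homAB F : homB1 F -> homAB th actM (nabla_theta th nabla0 F).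
Proof.
move=> hF; have hFb b := pullback_rhom1 F b hF.
case: (hF) => FS FL FA; case: th_dga => _ _ _ thd; split=> [c b b' | b a].
  have [_ nablaL _] := nabla0_conn _ _ (hFb b) (hFb b').
  rewrite !nabla_thetaE pullbackDl // nablaL ddD FL /=.
  by rewrite opprD addrACA scalerBr.
have [_ _ nablaA] := nabla0_conn _ _ (hFb b) (hFb b).
rewrite !nabla_thetaE pullback_mul_th nablaA dd_Leibniz0 (rhom1D hF).
rewrite -thd /= FA addrfctE /actHom dmul1r0 (homAB_mul_th _ _ (FS _)) (rmoduleBl M_rmod).
by rewrite opprD addrACA subrr addr0.
Qed.

Lemma nabla_theta_linear F G (c : k) : homB1 F -> homB1 G ->
  nabla_theta th nabla0 (fun w => c *: F w + G w)
  = c *: nabla_theta th nabla0 F + nabla_theta th nabla0 G.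
Proof.
move=> hF hG; apply: funext => b.
have [_ nablaL _] :=
  nabla0_conn _ _ (pullback_rhom1 F b hF) (pullback_rhom1 G b hG).
by rewrite /= !nabla_thetaE nablaL opprD addrACA scalerBr.
Qed.

Lemma nabla_theta_Leibniz F (b : WB 0%N) : homB1 F ->
  nabla_theta th nabla0 (fun w => F (dmul WB b w))
  = actHom (nabla_theta th nabla0 F) b + F (dd WB b).
Proof.
move=> hF; case: (hF) => _ _ FA; apply: funext => b'.
rewrite addrfctE /actHom !nabla_thetaE pullback_mul.
rewrite dd_Leibniz0 (rhom1D hF) FA addrfctE /actHom dmul1r0.
by rewrite opprD addrA addrAC subrK.
Qed.

End InducedHomConnection.

Theorem mainTheorem4 (k : fieldType) (WA WB : dga k)
    (th : forall n, WA n -> WB n) (M : lmodType k) (actM : M -> WA 0 -> M)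
    (nabla0 : (WA 1 -> M) -> M) :
  dga_map th ->
  rmodule actM ->
  hom_connection (fun _ : M => True) actM nabla0 ->
  hom_connection (W := WB) (P := (WB 0 -> M : lmodType k))
    (homAB th actM) (@actHom k WB M) (nabla_theta th nabla0).
Proof.
move=> th_dga M_rmod nabla0_conn F G hF hG; split.
- exact: nabla_theta_homAB th_dga M_rmod nabla0_conn F hF.
- by move=> c; exact: nabla_theta_linear th_dga nabla0_conn F G c hF hG.
- by move=> b; exact: nabla_theta_Leibniz F b hF.
Qed.
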